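(* For a finite set $T$ of prototiles of the binary Wang tiling problem, the following are equivalent: (i) $T$ tiles the square binary tiling; (ii) $T$ tiles every binary tiling of the half-plane; (iii) $T$ tiles every finite union of tiles of the square binary tiling and of every binary tiling of the half-plane.
   Context: The square binary tiling is the recursive self-similar subdivision of a square into $2\times1$ rectangles: one rectangle covers the upper half of the square, and the lower left and lower right quadrants are each subdivided by the same pattern recursively. Each tile's bottom side is the union of the top sides of its two children, and it shares its full left and right sides with same-sized neighbors. A binary tiling of the half-plane $\{y>0\}$ is a tiling by axis-parallel $2\times1$ rectangles with the same local structure: for some $c>0$ and each integer $k$, the tiles in the strip $c2^{k-1}\le y\le c2^{k}$ are the rectangles $[a_k+jc2^{k},a_k+(j+1)c2^{k}]\times[c2^{k-1},c2^{k}]$, $j\in\mathbb{Z}$, with offsets chosen so that each tile's bottom side is the union of the top sides of two tiles of the next lower strip (in the Poincaré half-plane model, these tiles are congruent). A prototile is a $2\times 1$ rectangle whose five edges (top, left, right, and the two halves of the bottom side) are colored. $T$ tiles a set of tiles if one can assign to each tile the coloring of some prototile in $T$ so that any two tiles sharing an edge give that edge the same color. *)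

From Stdlib Require Import Reals ZArith List.
Open Scope R_scope.

Inductive edge : Type := ETop | ELeft | ERight | EBotL | EBotR.

(* A prototile: a 2x1 rectangle with its five edges coloured. *)
Record prototile (C : Type) : Type := Proto {
  ctop : C; cleft : C; cright : C; cbotl : C; cbotr : C }.
Arguments Proto {C}.
Arguments ctop {C}. Arguments cleft {C}. Arguments cright {C}.
Arguments cbotl {C}. Arguments cbotr {C}.

Definition color {C : Type} (p : prototile C) (e : edge) : C :=
  match e with
  | ETop => ctop p | ELeft => cleft p | ERight => cright p
  | EBotL => cbotl p | EBotR => cbotr p
  end.

(* An axis-parallel rectangle [rx, rx + rw] x [ry, ry + rw/2]. *)
Record rect : Type := Rect { rx : R; ry : R; rw : R }.

Definition point : Type := (R * R)%type.

(* Edges as (oriented: left-to-right / bottom-to-top) segments. *)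
Definition seg (r : rect) (e : edge) : point * point :=
  let x := rx r in let y := ry r in let w := rw r in let h := w / 2 in
  match e with
  | ETop   => ((x, y + h), (x + w, y + h))
  | ELeft  => ((x, y), (x, y + h))
  | ERight => ((x + w, y), (x + w, y + h))
  | EBotL  => ((x, y), (x + w / 2, y))
  | EBotR  => ((x + w / 2, y), (x + w, y))
  end.

Definition tiles {C I : Type} (T : list (prototile C)) (tile : I -> rect)
    (S : I -> Prop) : Prop :=
  exists f : {i : I | S i} -> prototile C,
    (forall x, In (f x) T) /\
    (forall (x y : {i : I | S i}) (e e' : edge),
        seg (tile (proj1_sig x)) e = seg (tile (proj1_sig y)) e' ->
        color (f x) e = color (f y) e').

(* Square binary tiling of [0,1]^2: tile (n, j), j < 2^n, is
   [j/2^n, (j+1)/2^n] x [1/2^(n+1), 1/2^n]. *)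
Definition sq_index : Type := {p : nat * nat | (snd p < 2 ^ fst p)%nat}.

Definition sq_rect (i : sq_index) : rect :=
  let n := fst (proj1_sig i) in let j := snd (proj1_sig i) in
  Rect (INR j / 2 ^ n) (1 / 2 ^ (S n)) (1 / 2 ^ n).

(* Binary tiling of the half-plane with parameters c and offsets a:
   tile (k, j) is [a_k + j c 2^k, a_k + (j+1) c 2^k] x [c 2^(k-1), c 2^k]. *)
Definition hp_rect (c : R) (a : Z -> R) (p : Z * Z) : rect :=
  let k := fst p in let j := snd p in
  Rect (a k + IZR j * c * powerRZ 2 k) (c * powerRZ 2 (k - 1)) (c * powerRZ 2 k).

Definition is_hp_tiling (c : R) (a : Z -> R) : Prop :=
  0 < c /\
  forall k j : Z, exists j' : Z,
    seg (hp_rect c a ((k - 1)%Z, j')) ETop = seg (hp_rect c a (k, j)) EBotL /\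
    seg (hp_rect c a ((k - 1)%Z, (j' + 1)%Z)) ETop = seg (hp_rect c a (k, j)) EBotR.

(* The square binary tiling is the half-plane binary tiling with c = 1 and zero
   offsets, restricted to the levels k <= 0, so a tiling of every half-plane
   tiling restricts to one of the square.  Conversely, a finite patch of a
   half-plane tiling fits into a window [Y, Y + c 2^s] whose left end lies on
   the tile grid of every level occurring in the patch; the similarity sending
   this window onto [0, 1] sends the patch onto tiles of the square binary
   tiling, so a tiling of the square yields tilings of all finite patches.
   Since T is finite, König's lemma along an enumeration of the tiles turns
   tilings of all finite patches into a tiling of the whole. *)

From Stdlib Require Import Reals ZArith List Lia Lra Classical ClassicalEpsilon Cantor.

Definition countable (I : Type) : Prop :=
  exists enum : nat -> I, forall i, exists n, enum n = i.

Lemma countable_surj_image {A B : Type} (f : A -> B) :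
  (forall b, exists a, f a = b) -> countable A -> countable B.
Proof.
  intros Hf [enum Henum]. exists (fun n => f (enum n)). intros b.
  destruct (Hf b) as [x <-]. destruct (Henum x) as [n <-]. now exists n.
Qed.

Lemma countable_nat_pair : countable (nat * nat).
Proof. exists Cantor.of_nat. intros p. exists (Cantor.to_nat p). apply Cantor.cancel_of_to. Qed.

Lemma countable_prod {A B : Type} : countable A -> countable B -> countable (A * B).
Proof.
  intros [ea Ha] [eb Hb].
  apply (countable_surj_image (fun p => (ea (fst p), eb (snd p)))); [|exact countable_nat_pair].
  intros [x y]. destruct (Ha x) as [n <-], (Hb y) as [m <-]. now exists (n, m).
Qed.

Lemma countable_Z : countable Z.
Proof.
  apply (countable_surj_image (fun p => (Z.of_nat (fst p) - Z.of_nat (snd p))%Z));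
    [|exact countable_nat_pair].
  intros z. exists (Z.to_nat z, Z.to_nat (- z)). simpl. lia.
Qed.

Definition sq_index_of (p : nat * nat) : sq_index :=
  match lt_dec (snd p) (2 ^ fst p) with
  | left H => exist _ p H
  | right _ => exist _ (0, 0)%nat Nat.lt_0_1
  end.

Lemma countable_sq_index : countable sq_index.
Proof.
  apply (countable_surj_image sq_index_of); [|exact countable_nat_pair].
  intros [p H]. exists p. unfold sq_index_of.
  destruct (lt_dec (snd p) (2 ^ fst p)) as [H'|]; [|contradiction].
  f_equal. apply le_unique.
Qed.

Lemma list_uniform_bound {X : Type} (P : X -> nat -> Prop) (l : list X) :
  (forall x N N', P x N -> (N <= N')%nat -> P x N') ->
  (forall x, In x l -> exists N, P x N) -> exists N, forall x, In x l -> P x N.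
Proof.
  intros Pmono; induction l as [|y l IH]; intros Hl.
  - exists 0%nat; intros x [].
  - destruct (Hl y (or_introl eq_refl)) as [Ny Hy].
    destruct IH as [N HN]; [intros x Hx; apply Hl; now right|].
    exists (Nat.max Ny N). intros x [<-|Hx].
    + apply (Pmono _ Ny); [exact Hy | lia].
    + apply (Pmono _ N); [apply HN, Hx | lia].
Qed.

Section Compactness.

Variables (C I : Type) (T : list (prototile C)) (tile : I -> rect) (enum : nat -> I).

Definition compatible (i j : I) (p q : prototile C) : Prop :=
  forall e e', seg (tile i) e = seg (tile j) e' -> color p e = color q e'.

Definition valid_upto (n : nat) (h : nat -> prototile C) : Prop :=
  (forall a, (a < n)%nat -> In (h a) T) /\
  (forall a b, (a < n)%nat -> (b < n)%nat -> compatible (enum a) (enum b) (h a) (h b)).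

Definition agree_upto (n : nat) (g h : nat -> prototile C) : Prop :=
  forall a, (a < n)%nat -> g a = h a.

Definition extendable (n : nat) (g : nat -> prototile C) : Prop :=
  forall N, exists h, agree_upto n g h /\ valid_upto (n + N) h.

Definition upd (g : nat -> prototile C) (n : nat) (x : prototile C) : nat -> prototile C :=
  fun a => if Nat.eqb a n then x else g a.

Lemma valid_upto_le n n' h : (n <= n')%nat -> valid_upto n' h -> valid_upto n h.
Proof. intros Hn [HT Hc]; split; intros; [apply HT | apply Hc]; lia. Qed.

Lemma valid_upto_agree n g h : agree_upto n g h -> valid_upto n h -> valid_upto n g.
Proof.
  intros Hgh [HT Hc]; split.
  - intros a Ha. rewrite Hgh by exact Ha. now apply HT.
  - intros a b Ha Hb. rewrite (Hgh a Ha), (Hgh b Hb). now apply Hc.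
Qed.

Lemma extendable_valid n g : extendable n g -> valid_upto n g.
Proof.
  intros Hg. destruct (Hg 0%nat) as [h [Hgh Hh]].
  apply (valid_upto_agree _ _ h Hgh). now rewrite Nat.add_0_r in Hh.
Qed.

(* König's lemma step: T is finite, so some choice at position [n] stays extendable. *)
Lemma extendable_step n g : extendable n g -> exists x, extendable (S n) (upd g n x).
Proof.
  intros Hg. apply NNPP; intros Hnone.
  set (P := fun x N => ~ exists h, agree_upto (S n) (upd g n x) h /\ valid_upto (S n + N) h).
  destruct (list_uniform_bound P T) as [N HN].
  - intros x N N' HP HN' [h [Hgh Hh]]. apply HP. exists h. split; [exact Hgh|].
    apply (valid_upto_le _ (S n + N')); [lia | exact Hh].
  - intros x _. apply NNPP; intros Hx. apply Hnone. exists x. intros N.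
    apply NNPP; intros HN. apply Hx. now exists N.
  - destruct (Hg (S N)) as [h [Hgh Hh]].
    apply (HN (h n)); [apply (proj1 Hh); lia|]. exists h. split.
    + intros a Ha. unfold upd. destruct (Nat.eqb_spec a n) as [->|]; [reflexivity|].
      apply Hgh; lia.
    + now replace (S n + N)%nat with (n + S N)%nat by lia.
Qed.

Variable d : prototile C.

Fixpoint prefix (n : nat) : nat -> prototile C :=
  match n with
  | O => fun _ => d
  | S n => upd (prefix n) n
             (epsilon (inhabits d) (fun x => extendable (S n) (upd (prefix n) n x)))
  end.

Definition limit (a : nat) : prototile C := prefix (S a) a.

Lemma prefix_extendable : extendable 0 (prefix 0) -> forall n, extendable n (prefix n).
Proof.
  intros H0 n; induction n as [|n IH]; [exact H0|].
  exact (epsilon_spec _ (fun x => extendable (S n) (upd (prefix n) n x))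
           (extendable_step n _ IH)).
Qed.

Lemma prefix_agree n m : (n <= m)%nat -> agree_upto n (prefix n) (prefix m).
Proof.
  induction 1 as [|m Hm IH]; [now intros a|].
  intros a Ha. rewrite IH by exact Ha. simpl. unfold upd.
  destruct (Nat.eqb_spec a m); [lia | reflexivity].
Qed.

Lemma limit_valid : extendable 0 (prefix 0) -> forall n, valid_upto n limit.
Proof.
  intros H0 n. apply (valid_upto_agree _ _ (prefix n)).
  - intros a Ha. apply prefix_agree; lia.
  - now apply extendable_valid, prefix_extendable.
Qed.

Lemma extendable_of_finite_tiles g :
  (forall L, tiles T tile (fun i => In i L)) -> extendable 0 g.
Proof.
  intros Hfin N. destruct (Hfin (map enum (seq 0 N))) as [f [HfT Hfc]].
  assert (Hmem : forall a, (a < N)%nat -> In (enum a) (map enum (seq 0 N)))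
    by (intros a Ha; apply in_map, in_seq; lia).
  exists (fun a => match lt_dec a N with
                   | left Ha => f (exist _ (enum a) (Hmem a Ha))
                   | right _ => d
                   end).
  split; [intros a Ha; lia|]. split.
  - intros a Ha. destruct (lt_dec a N); [apply HfT | lia].
  - intros a b Ha Hb e e' Hseg.
    destruct (lt_dec a N); [|lia]. destruct (lt_dec b N); [|lia]. now apply Hfc.
Qed.

Hypothesis enum_surj : forall i, exists n, enum n = i.

Lemma tiles_of_valid (G : nat -> prototile C) :
  (forall n, valid_upto n G) -> tiles T tile (fun _ => True).
Proof.
  intros HG.
  set (index := fun i => epsilon (inhabits 0%nat) (fun n => enum n = i)).
  assert (Hindex : forall i, enum (index i) = i)
    by (intros i; apply (epsilon_spec _ (fun n => enum n = i)), enum_surj).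
  exists (fun x => G (index (proj1_sig x))). split.
  - intros x. apply (proj1 (HG (S (index (proj1_sig x))))). lia.
  - intros x y e e' Hseg.
    apply (proj2 (HG (S (Nat.max (index (proj1_sig x)) (index (proj1_sig y)))))); try lia.
    now rewrite !Hindex.
Qed.

End Compactness.

Theorem tiles_of_finite_tiles {C I : Type} (T : list (prototile C)) (tile : I -> rect) :
  countable I -> (forall L, tiles T tile (fun i => In i L)) -> tiles T tile (fun _ => True).
Proof.
  intros [enum Henum] Hfin.
  destruct (Hfin (enum 0%nat :: nil)) as [f _].
  set (d := f (exist _ (enum 0%nat) (or_introl eq_refl))).
  apply (tiles_of_valid C I T tile enum Henum (limit C I T tile enum d)).
  apply limit_valid, (extendable_of_finite_tiles _ _ _ _ _ d), Hfin.
Qed.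

Open Scope R_scope.

Lemma tiles_transfer {C I J : Type} (T : list (prototile C))
    (tile : I -> rect) (tile' : J -> rect) (S : I -> Prop) (S' : J -> Prop)
    (G : point * point -> point * point) :
  (forall s s', G s = G s' -> s = s') ->
  (forall j, S' j -> exists i, S i /\ forall e, seg (tile' j) e = G (seg (tile i) e)) ->
  tiles T tile S -> tiles T tile' S'.
Proof.
  intros Ginj Himg [f [HfT Hfc]].
  set (pre := fun x : {j | S' j} =>
                constructive_indefinite_description _ (Himg _ (proj2_sig x))).
  exists (fun x => f (exist _ (proj1_sig (pre x)) (proj1 (proj2_sig (pre x))))).
  split; [intros; apply HfT|].
  intros x y e e' Hseg. apply Hfc. simpl. apply Ginj.
  now rewrite <- (proj2 (proj2_sig (pre x))), <- (proj2 (proj2_sig (pre y))).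
Qed.

Lemma tiles_restrict {C I : Type} (T : list (prototile C)) (tile : I -> rect) (S : I -> Prop) :
  tiles T tile (fun _ => True) -> tiles T tile S.
Proof.
  apply (tiles_transfer T tile tile _ S (fun s => s)); [easy|].
  intros i _. now exists i.
Qed.

Definition sim (al be : R) (p : point) : point := (al * fst p + be, al * snd p).

Definition sim_seg (al be : R) (s : point * point) : point * point :=
  (sim al be (fst s), sim al be (snd s)).

Definition rect_sim (al be : R) (r : rect) : rect :=
  Rect (al * rx r + be) (al * ry r) (al * rw r).

Lemma seg_rect_sim al be r e : seg (rect_sim al be r) e = sim_seg al be (seg r e).
Proof.
  destruct r as [x y w].
  destruct e; unfold sim_seg, sim, seg, rect_sim; cbn [fst snd rx ry rw];
    repeat apply (f_equal2 pair); field.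
Qed.

Lemma sim_seg_inj al be : al <> 0 ->
  forall s s', sim_seg al be s = sim_seg al be s' -> s = s'.
Proof.
  intros Hal [[x1 y1] [x2 y2]] [[x1' y1'] [x2' y2']].
  unfold sim_seg, sim; simpl. intros Heq. injection Heq; intros.
  repeat f_equal; apply (Rmult_eq_reg_l al); lra.
Qed.

Lemma powerRZ2_pred k : powerRZ 2 (k - 1) = powerRZ 2 k / 2.
Proof.
  replace k with (k - 1 + 1)%Z at 2 by lia.
  rewrite powerRZ_add by lra. simpl. field.
Qed.

Lemma powerRZ2_lt k K : (k < K)%Z -> powerRZ 2 k < powerRZ 2 K.
Proof.
  intros HkK. replace K with (k + Z.of_nat (Z.to_nat (K - k)))%Z by lia.
  rewrite powerRZ_add, <- pow_powerRZ by lra.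
  assert (1 < 2 ^ Z.to_nat (K - k)) by (apply (Rlt_pow 2 0); [lra | lia]).
  assert (0 < powerRZ 2 k) by (apply powerRZ_lt; lra). nra.
Qed.

Lemma powerRZ2_le_inv k K : powerRZ 2 k <= powerRZ 2 K -> (k <= K)%Z.
Proof.
  intros Hle. destruct (Z_le_gt_dec k K) as [|HKk]; [assumption|].
  assert (HKk' : (K < k)%Z) by lia. apply powerRZ2_lt in HKk'. lra.
Qed.

Lemma powerRZ2_unbounded r : exists K, r <= powerRZ 2 K.
Proof.
  destruct (Pow_x_infinity 2 ltac:(rewrite Rabs_pos_eq; lra) r) as [N HN].
  exists (Z.of_nat N). rewrite <- pow_powerRZ.
  specialize (HN N (le_n N)). rewrite Rabs_pos_eq in HN by (apply pow_le; lra). lra.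
Qed.

Lemma sq_rect_as_hp (i : sq_index) :
  sq_rect i = hp_rect 1 (fun _ => 0)
                ((- Z.of_nat (fst (proj1_sig i)))%Z, Z.of_nat (snd (proj1_sig i))).
Proof.
  destruct i as [[n j] Hj]. unfold sq_rect, hp_rect; simpl.
  assert (0 < 2 ^ n) by (apply pow_lt; lra).
  rewrite powerRZ2_pred, powerRZ_neg', <- pow_powerRZ, <- INR_IZR_INZ.
  f_equal; field; lra.
Qed.

Lemma hp_tiling_standard : is_hp_tiling 1 (fun _ => 0).
Proof.
  split; [lra|]. intros k j. exists (2 * j)%Z.
  unfold hp_rect, seg; cbn [fst snd rx ry rw].
  rewrite !powerRZ2_pred, plus_IZR, !mult_IZR. split; repeat apply (f_equal2 pair); field.
Qed.

Lemma list_upper_bound {X : Type} (f : X -> R) (l : list X) :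
  exists M, forall x, In x l -> f x <= M.
Proof.
  induction l as [|y l [M HM]]; [exists 0; intros x []|].
  exists (Rmax (f y) M). intros x [<-|Hx]; [apply Rmax_l|].
  eapply Rle_trans; [apply HM, Hx | apply Rmax_r].
Qed.

Lemma grid_point_below (x0 w x : R) : 0 < w ->
  exists t : Z, x0 + IZR t * w <= x < x0 + IZR t * w + w.
Proof.
  intros Hw. set (r := (x - x0) / w). exists (Int_part r).
  destruct (base_Int_part r) as [H1 H2].
  assert (Hr : r * w = x - x0) by (unfold r; field; lra).
  split; nra.
Qed.

Lemma square_tile_exists (n : nat) (z : Z) : (0 <= z)%Z -> IZR z + 1 <= 2 ^ n ->
  exists i, sq_rect i = Rect (IZR z / 2 ^ n) (1 / 2 ^ S n) (1 / 2 ^ n).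
Proof.
  intros Hz Hfit.
  assert (Hnat : INR (Z.to_nat z) = IZR z) by now rewrite INR_IZR_INZ, Z2Nat.id.
  assert (Hlt : (Z.to_nat z < 2 ^ n)%nat).
  { apply INR_lt. rewrite pow_INR, Hnat. replace (INR 2) with 2 by (simpl; lra). lra. }
  exists (exist _ (n, Z.to_nat z) Hlt). unfold sq_rect; simpl. now rewrite Hnat.
Qed.

Section HalfPlane.

Variables (c : R) (a : Z -> R).
Hypothesis Hhp : is_hp_tiling c a.

Definition on_grid (k : Z) (x : R) : Prop :=
  exists m : Z, x = a k + IZR m * c * powerRZ 2 k.

(* The left end of the bottom side of a tile is the left end of its left child. *)
Lemma on_grid_pred k x : on_grid (k + 1) x -> on_grid k x.
Proof.
  intros [m ->]. destruct (proj2 Hhp (k + 1)%Z m) as [j [Hleft _]].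
  exists j. unfold seg, hp_rect in Hleft; simpl in Hleft.
  replace (k + 1 - 1)%Z with k in Hleft by lia.
  injection Hleft. intros. lra.
Qed.

Lemma on_grid_le k K x : (k <= K)%Z -> on_grid K x -> on_grid k x.
Proof.
  intros HkK. replace K with (k + Z.of_nat (Z.to_nat (K - k)))%Z by lia.
  induction (Z.to_nat (K - k)) as [|n IH]; intros Hx.
  - now rewrite Z.add_0_r in Hx.
  - apply IH, on_grid_pred.
    now replace (k + Z.of_nat n + 1)%Z with (k + Z.of_nat (S n))%Z by lia.
Qed.

Lemma hp_tile_in_square s Y k j :
  on_grid k Y -> Y <= rx (hp_rect c a (k, j)) ->
  rx (hp_rect c a (k, j)) + rw (hp_rect c a (k, j)) <= Y + c * powerRZ 2 s ->
  exists i, hp_rect c a (k, j) = rect_sim (c * powerRZ 2 s) Y (sq_rect i).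
Proof.
  intros [m ->] Hleft Hright.
  unfold hp_rect in Hleft, Hright; cbn [fst snd rx rw] in Hleft, Hright.
  assert (Hc : 0 < c) by apply Hhp.
  set (P := powerRZ 2 k) in *. assert (HP : 0 < P) by (apply powerRZ_lt; lra).
  assert (Hmj : (m <= j)%Z).
  { apply le_IZR. apply (Rmult_le_reg_r (c * P)); nra. }
  assert (Hfit : (IZR (j - m) + 1) * P <= powerRZ 2 s).
  { rewrite minus_IZR. apply (Rmult_le_reg_l c); nra. }
  assert (Hks : (k <= s)%Z).
  { apply powerRZ2_le_inv. assert (0 <= IZR (j - m)) by (apply IZR_le; lia). fold P. nra. }
  set (n := Z.to_nat (s - k)).
  assert (Hs : powerRZ 2 s = P * 2 ^ n).
  { unfold n, P. rewrite pow_powerRZ, Z2Nat.id, <- powerRZ_add by lia || lra.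
    f_equal. lia. }
  assert (H2n : 0 < 2 ^ n) by (apply pow_lt; lra).
  destruct (square_tile_exists n (j - m)) as [i Hi]; [lia| |].
  { rewrite Hs in Hfit. apply (Rmult_le_reg_l P); nra. }
  exists i. rewrite Hi. unfold hp_rect, rect_sim; cbn [fst snd rx ry rw].
  rewrite Hs, powerRZ2_pred, minus_IZR. fold P. simpl (2 ^ S n).
  f_equal; field; lra.
Qed.

Lemma hp_window (L : list (Z * Z)) : exists s Y, forall k j, In (k, j) L ->
  on_grid k Y /\ Y <= rx (hp_rect c a (k, j)) /\
  rx (hp_rect c a (k, j)) + rw (hp_rect c a (k, j)) <= Y + c * powerRZ 2 s.
Proof.
  assert (Hc : 0 < c) by apply Hhp.
  destruct (list_upper_bound (fun i => rx (hp_rect c a i) + rw (hp_rect c a i)) L) as [hi Hhi].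
  destruct (list_upper_bound (fun i => - rx (hp_rect c a i)) L) as [mlo Hlo].
  destruct (powerRZ2_unbounded ((hi + mlo) / c)) as [K HK].
  set (Q := powerRZ 2 K) in *. assert (HQ : 0 < Q) by (apply powerRZ_lt; lra).
  assert (Hspan : hi + mlo <= c * Q).
  { apply (Rmult_le_compat_l c) in HK; [|lra].
    now replace (c * ((hi + mlo) / c)) with (hi + mlo) in HK by (field; lra). }
  (* The window [Y, Y + c 2^(K+1)] is usually not a tile: it is aligned only with
     the level-K grid, which suffices since every tile of L has level at most K. *)
  destruct (grid_point_below (a K) (c * Q) (- mlo)) as [t [Hbelow Habove]]; [nra|].
  exists (K + 1)%Z, (a K + IZR t * (c * Q)). intros k j Hin.
  specialize (Hhi _ Hin). specialize (Hlo _ Hin). cbn [fst snd rx rw hp_rect] in Hhi, Hlo |- *.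
  assert (HkK : (k <= K)%Z).
  { apply powerRZ2_le_inv. apply (Rmult_le_reg_l c); [lra|]. fold Q. lra. }
  split; [|split].
  - apply (on_grid_le k K); [exact HkK|]. exists t. unfold Q. ring.
  - lra.
  - rewrite powerRZ_add by lra. fold Q. simpl. lra.
Qed.

Lemma hp_patch_tiles {C : Type} (T : list (prototile C)) (L : list (Z * Z)) :
  tiles T sq_rect (fun _ => True) -> tiles T (hp_rect c a) (fun i => In i L).
Proof.
  assert (Hc : 0 < c) by apply Hhp.
  destruct (hp_window L) as [s [Y HY]].
  apply (tiles_transfer T sq_rect (hp_rect c a) _ _ (sim_seg (c * powerRZ 2 s) Y)).
  - apply sim_seg_inj. assert (0 < powerRZ 2 s) by (apply powerRZ_lt; lra). nra.
  - intros [k j] Hin. destruct (HY k j Hin) as [Hgrid [Hleft Hright]].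
    destruct (hp_tile_in_square s Y k j Hgrid Hleft Hright) as [i Hi].
    exists i. split; [easy|]. intros e. rewrite Hi. apply seg_rect_sim.
Qed.

End HalfPlane.

Theorem lemma29 (C : Type) (T : list (prototile C)) :
  let tiles_square := tiles T sq_rect (fun _ => True) in
  let tiles_halfplanes :=
    forall (c : R) (a : Z -> R), is_hp_tiling c a ->
      tiles T (hp_rect c a) (fun _ => True) in
  let tiles_finite_unions :=
    (forall L : list sq_index, tiles T sq_rect (fun i => In i L)) /\
    (forall (c : R) (a : Z -> R), is_hp_tiling c a ->
       forall L : list (Z * Z), tiles T (hp_rect c a) (fun i => In i L)) in
  (tiles_square <-> tiles_halfplanes) /\ (tiles_square <-> tiles_finite_unions).
Proof.
  intros tiles_square tiles_halfplanes tiles_finite_unions.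
  assert (square_to_halfplanes : tiles_square -> tiles_halfplanes).
  { intros Hsq c a Hhp.
    apply tiles_of_finite_tiles; [exact (countable_prod countable_Z countable_Z)|].
    intros L. now apply hp_patch_tiles. }
  assert (halfplanes_to_square : tiles_halfplanes -> tiles_square).
  { intros Hhp.
    apply (tiles_transfer T (hp_rect 1 (fun _ => 0)) sq_rect (fun _ => True) _ (fun s => s));
      [easy | | apply Hhp, hp_tiling_standard].
    intros i _. eexists; split; [easy|]. intros e. now rewrite sq_rect_as_hp. }
  split; split; [exact square_to_halfplanes | exact halfplanes_to_square | |].
  - intros Hsq. split; [intros L; now apply tiles_restrict|].
    intros c a Hhp L. now apply hp_patch_tiles.
  - intros [Hsq_fin _]. exact (tiles_of_finite_tiles T sq_rect countable_sq_index Hsq_fin).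
Qed.
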